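(* Let $f:\mathbb{R}\to\mathbb{R}$ be twice continuously differentiable. Let $u_1,\dots,u_n\in\mathbb{R}$, let $J=[\min_i u_i,\max_i u_i]$ and assume $f''(v)\neq 0$ for all $v\in J$. Let $t_1<t_2$ and $x_i(t)=x_i(t_1)+f'(u_i)(t-t_1)$, $i=1,\dots,n$, be characteristic particles with $x_1(t)<x_2(t)<\dots<x_n(t)$ for all $t\in[t_1,t_2]$. For each $t$ let $u(\cdot,t)$ be the interpolant of the particles $(x_i(t),u_i)$ defined below. Then $u$ is a classical (continuous) solution of $u_t+(f(u))_x=0$: it is continuous on $\{(x,t):t\in[t_1,t_2],\ x_1(t)\le x\le x_n(t)\}$ and satisfies $u_t+(f(u))_x=0$ at every point $(x,t)$ with $t\in(t_1,t_2)$ and $x_i(t)<x<x_{i+1}(t)$ for some $i$. In particular, for all $t\in[t_1,t_2]$ and $i=1,\dots,n-1$, $$\int_{x_i(t)}^{x_{i+1}(t)}u(x,t)\,\mathrm{d}x=\big(x_{i+1}(t)-x_i(t)\big)\,a(u_i,u_{i+1}).$$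
   Context: Interpolant: given particles $(x_i,u_i)$ with $x_1<\dots<x_n$, on $[x_i,x_{i+1}]$ define $u$ as the constant $u_i$ if $u_i=u_{i+1}$; otherwise $u$ is the inverse of the strictly monotone map $v\mapsto x_i+\frac{f'(v)-f'(u_i)}{f'(u_{i+1})-f'(u_i)}(x_{i+1}-x_i)$ on the closed interval with endpoints $u_i,u_{i+1}$. For $g:\mathbb{R}\to\mathbb{R}$ write $[g(u)]_{a}^{b}=g(b)-g(a)$. For $v_1\neq v_2$ the nonlinear average is $a(v_1,v_2)=\frac{[f'(u)u-f(u)]_{v_1}^{v_2}}{[f'(u)]_{v_1}^{v_2}}=\frac{\int_{v_1}^{v_2}f''(u)u\,\mathrm{d}u}{\int_{v_1}^{v_2}f''(u)\,\mathrm{d}u}$, and $a(v,v)=v$. *)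

From Stdlib Require Import Reals.
From Coquelicot Require Import Coquelicot.
Open Scope R_scope.

Definition char_pos (fp : R -> R) (t1 x0 v t : R) : R := x0 + fp v * (t - t1).

(* [interp_seg fp xa xb ua ub x v]: v is the value at x of the interpolant on
   the segment [xa,xb] between particles (xa,ua), (xb,ub):
   v = ua if ua = ub, otherwise v is the (unique) point of the closed interval
   with endpoints ua, ub mapped to x by
   w |-> xa + (f'(w)-f'(ua))/(f'(ub)-f'(ua)) (xb-xa)  (i.e. v = inverse map at x). *)
Definition interp_seg (fp : R -> R) (xa xb ua ub x v : R) : Prop :=
  (ua = ub /\ v = ua) \/
  (ua <> ub /\ Rmin ua ub <= v <= Rmax ua ub /\
   xa + (fp v - fp ua) / (fp ub - fp ua) * (xb - xa) = x).

Definition nl_avg (f fp : R -> R) (v1 v2 : R) : R :=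
  if Req_EM_T v1 v2 then v1
  else ((fp v2 * v2 - f v2) - (fp v1 * v1 - f v1)) / (fp v2 - fp v1).

From Stdlib Require Import Reals Lra Lia Classical.
From Coquelicot Require Import Coquelicot.
Open Scope R_scope.

(* Since f'' is continuous and nonzero on J, |f''| >= k > 0 there, so f' is
   expansive on J: k |a - b| <= |f'(a) - f'(b)|.  Between two consecutive
   characteristics with u_i <> u_{i+1}, the interpolant is characterised by
   f'(u(x,t)) = w(x,t), where w is the affine interpolation in x of the speeds
   f'(u_i), f'(u_{i+1}) between the two characteristics.  As each end of the
   cell moves with the speed it carries, w solves Burgers' equation
   w_t + w w_x = 0; the inverse function rule gives u_t = w_t / f''(u) and
   f(u)_x = f'(u) w_x / f''(u), whence u_t + f(u)_x = 0.  Continuity follows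
   from |u - u'| <= |w - w'| / k on each closed cell, pasted over the finitely
   many cells.  The integral identity is the substitution
   x = x_i + (f'(v) - f'(u_i)) / (f'(u_{i+1}) - f'(u_i)) (x_{i+1} - x_i), which
   turns the integral of u dx into a multiple of the integral of v f''(v) dv. *)

Lemma ball_R (x e y : R) : @ball R_UniformSpace x e y <-> Rabs (y - x) < e.
Proof. reflexivity. Qed.

Lemma continuous_continuity_pt (h : R -> R) x : continuous h x -> continuity_pt h x.
Proof. exact (proj2 (continuity_pt_filterlim h x)). Qed.

Lemma is_derive_continuity_pt (h dh : R -> R) x :
  (forall v, is_derive h v (dh v)) -> continuity_pt h x.
Proof.
  intro Hd. apply continuous_continuity_pt. refine (ex_derive_continuous h x _).
  exists (dh x); apply Hd.
Qed.

Lemma Rabs_lbound_continuous (h : R -> R) m M :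
  m <= M -> (forall v, continuous h v) -> (forall v, m <= v <= M -> h v <> 0) ->
  exists k, 0 < k /\ forall v, m <= v <= M -> k <= Rabs (h v).
Proof.
  intros HmM Hc Hnz.
  destruct (continuity_ab_min (fun v => Rabs (h v)) m M HmM) as [v0 [Hmin Hv0]].
  { intros v _. apply continuous_continuity_pt, continuous_Rabs_comp, Hc. }
  exists (Rabs (h v0)). split; [apply Rabs_pos_lt, Hnz; lra | exact Hmin].
Qed.

Lemma expansive_of_deriv_lbound (h dh : R -> R) m M k :
  (forall v, is_derive h v (dh v)) -> (forall v, m <= v <= M -> k <= Rabs (dh v)) ->
  forall a b, m <= a <= M -> m <= b <= M -> k * Rabs (a - b) <= Rabs (h a - h b).
Proof.
  intros Hd Hk a b Ha Hb.
  destruct (MVT_gen h b a dh) as [c [Hc ->]].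
  - intros; apply Hd.
  - intros; exact (is_derive_continuity_pt h dh _ Hd).
  - rewrite Rabs_mult. apply Rmult_le_compat_r; [apply Rabs_pos|]. apply Hk.
    revert Hc; unfold Rmin, Rmax; destruct Rle_dec; lra.
Qed.

Lemma expansive_inj (h : R -> R) m M k a b :
  0 < k -> (forall a b, m <= a <= M -> m <= b <= M -> k * Rabs (a - b) <= Rabs (h a - h b)) ->
  m <= a <= M -> m <= b <= M -> h a = h b -> a = b.
Proof.
  intros Hk Hexp Ha Hb E. specialize (Hexp a b Ha Hb). rewrite E, Rminus_eq_0, Rabs_R0 in Hexp.
  destruct (Req_dec a b) as [|Hab]; [assumption|].
  assert (0 < Rabs (a - b)) by (apply Rabs_pos_lt; lra). nra.
Qed.

Lemma continuous_nonzero_mul_pos (h : R -> R) m M a b :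
  (forall v, continuous h v) -> (forall v, m <= v <= M -> h v <> 0) ->
  m <= a <= M -> m <= b <= M -> 0 < h a * h b.
Proof.
  intros Hc Hnz Ha Hb. destruct (Rlt_le_dec 0 (h a * h b)) as [|Hle]; [assumption|].
  destruct (IVT_gen h a b 0) as [z [Hz Hz0]].
  - intro x; apply continuous_continuity_pt, Hc.
  - unfold Rmin, Rmax; destruct Rle_dec; nra.
  - exfalso. apply (Hnz z); [|exact Hz0]. revert Hz; unfold Rmin, Rmax; destruct Rle_dec; lra.
Qed.

Lemma deriv_nonzero_between (h dh : R -> R) a b v :
  (forall v, is_derive h v (dh v)) -> (forall v, continuous dh v) ->
  (forall w, Rmin a b <= w <= Rmax a b -> dh w <> 0) ->
  Rmin a b <= v <= Rmax a b -> 0 <= (h v - h a) * (h b - h v).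
Proof.
  intros Hd Hc Hnz Hv.
  assert (Hin : forall c, Rmin a v <= c <= Rmax a v \/ Rmin v b <= c <= Rmax v b ->
                          Rmin a b <= c <= Rmax a b).
  { intro c; revert Hv; unfold Rmin, Rmax; repeat destruct Rle_dec; lra. }
  destruct (MVT_gen h a v dh) as [c1 [Hc1 ->]];
    [intros; apply Hd | intros; exact (is_derive_continuity_pt h dh _ Hd) |].
  destruct (MVT_gen h v b dh) as [c2 [Hc2 ->]];
    [intros; apply Hd | intros; exact (is_derive_continuity_pt h dh _ Hd) |].
  assert (Hpos := continuous_nonzero_mul_pos dh _ _ c1 c2 Hc Hnz
                    (Hin c1 (or_introl Hc1)) (Hin c2 (or_intror Hc2))).
  assert (0 <= (v - a) * (b - v)) by (revert Hv; unfold Rmin, Rmax; destruct Rle_dec; nra).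
  nra.
Qed.

Lemma filterlim_of_expansive {T : Type} (F : (T -> Prop) -> Prop) {FF : Filter F}
  (h : R -> R) m M k (g W : T -> R) y0 :
  0 < k -> (forall a b, m <= a <= M -> m <= b <= M -> k * Rabs (a - b) <= Rabs (h a - h b)) ->
  m <= y0 <= M -> F (fun q => m <= g q <= M /\ h (g q) = W q) ->
  filterlim W F (locally (h y0)) -> filterlim g F (locally y0).
Proof.
  intros Hk Hexp Hy0 Hg HW. apply filterlim_locally. intro eps.
  apply filterlim_locally with (eps := mkposreal _ (Rmult_lt_0_compat _ _ (cond_pos eps) Hk)) in HW.
  apply (filter_imp _ _ ) with (2 := filter_and _ _ Hg HW). intros q [[Hq E] Hball].
  rewrite ball_R in *. simpl in Hball. rewrite <- E in Hball.
  assert (L := Hexp _ _ Hq Hy0). apply Rmult_lt_reg_r with k; lra.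
Qed.

(* Caratheodory's characterisation of the derivative. *)
Definition slope (h : R -> R) (a l x : R) : R :=
  if Req_EM_T x a then l else (h x - h a) / (x - a).

Lemma slope_at (h : R -> R) a l : slope h a l a = l.
Proof. unfold slope. destruct (Req_EM_T a a) as [|C]; [reflexivity | now elim C]. Qed.

Lemma slope_spec (h : R -> R) a l x : h x - h a = slope h a l x * (x - a).
Proof.
  unfold slope. destruct (Req_EM_T x a) as [->|Hxa]; [ring | field; lra].
Qed.

Lemma continuous_slope (h : R -> R) a l : is_derive h a l -> continuous (slope h a l) a.
Proof.
  intro Hd. apply filterlim_locally. intro eps.
  destruct (proj1 (is_derive_Reals _ _ _) Hd eps (cond_pos eps)) as [d Hdd].
  exists d. intros y Hy. change R in y. rewrite ball_R in *. rewrite slope_at.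
  unfold slope. destruct (Req_EM_T y a) as [_|Hya].
  - rewrite Rminus_eq_0, Rabs_R0. apply cond_pos.
  - specialize (Hdd (y - a) ltac:(lra) Hy). now replace (a + (y - a)) with y in Hdd by ring.
Qed.

Lemma is_derive_of_slope (h q : R -> R) a :
  locally a (fun x => h x - h a = q x * (x - a)) -> continuous q a -> is_derive h a (q a).
Proof.
  intros [d1 Hd1] Hq. apply is_derive_Reals. intros eps Heps.
  apply filterlim_locally with (eps := mkposreal eps Heps) in Hq. destruct Hq as [d2 Hd2].
  exists (mkposreal _ (Rmin_pos _ _ (cond_pos d1) (cond_pos d2))). simpl.
  intros dx Hdx Hlt.
  assert (Hball : forall d : posreal, Rmin d1 d2 <= d -> ball a d (a + dx)).
  { intros d Hd. rewrite ball_R. replace (a + dx - a) with dx by ring. lra. }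
  rewrite (Hd1 _ (Hball d1 (Rmin_l _ _))).
  replace (a + dx - a) with dx by ring.
  unfold Rdiv. rewrite Rmult_assoc, Rinv_r, Rmult_1_r by exact Hdx.
  exact (Hd2 _ (Hball d2 (Rmin_r _ _))).
Qed.

Lemma is_derive_inverse (h dh g W : R -> R) m M k t dW :
  0 < k -> (forall a b, m <= a <= M -> m <= b <= M -> k * Rabs (a - b) <= Rabs (h a - h b)) ->
  is_derive h (g t) (dh (g t)) -> dh (g t) <> 0 ->
  locally t (fun s => m <= g s <= M /\ h (g s) = W s) -> is_derive W t dW ->
  is_derive g t (dW / dh (g t)).
Proof.
  intros Hk Hexp Hdh Hdh0 Hloc HdW.
  destruct (locally_singleton _ _ Hloc) as [Hgt Egt].
  assert (Hg : continuous g t).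
  { apply (filterlim_of_expansive _ h m M k g W (g t) Hk Hexp Hgt Hloc).
    rewrite Egt. refine (ex_derive_continuous W t _). now exists dW. }
  set (rho := slope h (g t) (dh (g t))).
  assert (Hrho : forall s, m <= g s <= M -> rho (g s) <> 0).
  { intros s Hs E. destruct (Req_dec (g s) (g t)) as [Est|Hne].
    - apply Hdh0. unfold rho in E. now rewrite Est, slope_at in E.
    - apply Hne, (expansive_inj h m M k _ _ Hk Hexp Hs Hgt).
      apply Rminus_diag_uniq. unfold rho in E. now rewrite (slope_spec _ _ (dh (g t))), E, Rmult_0_l. }
  set (q := fun s => slope W t dW s / rho (g s)).
  replace (dW / dh (g t)) with (q t) by (unfold q, rho; now rewrite !slope_at).
  apply is_derive_of_slope.
  - apply (filter_imp _ _) with (2 := Hloc). intros s [Hs Es].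
    apply (Rmult_eq_reg_l (rho (g s))); [|exact (Hrho s Hs)].
    unfold q, rho; rewrite <- slope_spec, Es, Egt, (slope_spec W t dW). field. exact (Hrho s Hs).
  - apply (continuous_mult (fun s => slope W t dW s) (fun s => / rho (g s))).
    + exact (continuous_slope W t dW HdW).
    + apply continuous_Rinv_comp; [|exact (Hrho t Hgt)].
      exact (continuous_comp g rho t Hg (continuous_slope h _ _ Hdh)).
Qed.

Lemma locally_lt {T : UniformSpace} (f g : T -> R) p :
  continuous f p -> continuous g p -> f p < g p -> locally p (fun q => f q < g q).
Proof.
  intros Hf Hg Hlt.
  assert (H : continuous (fun q => g q - f q) p)
    by exact (continuous_plus _ _ p Hg (continuous_opp _ p Hf)).
  apply filterlim_locally with (eps := mkposreal (g p - f p) ltac:(lra)) in H.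
  apply (filter_imp _ _) with (2 := H). intros q Hq. rewrite ball_R in Hq. simpl in Hq.
  apply Rabs_def2 in Hq. lra.
Qed.

Lemma closed_le_fun {T : UniformSpace} (f g : T -> R) :
  (forall p, continuous f p) -> (forall p, continuous g p) -> closed (fun q => f q <= g q).
Proof.
  intros Hf Hg. apply (closed_ext (fun q => ~ g q < f q)); [intro q; lra|].
  apply closed_not. intros p Hp. exact (locally_lt g f p (Hg p) (Hf p) Hp).
Qed.

Lemma filter_forall_lt {T : Type} (F : (T -> Prop) -> Prop) {FF : Filter F}
  (P : nat -> T -> Prop) m :
  (forall i, (i < m)%nat -> F (P i)) -> F (fun q => forall i, (i < m)%nat -> P i q).
Proof.
  induction m as [|m IH]; intro HP.
  - apply filter_forall. intros q i Hi. lia.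
  - assert (Hlt : F (fun q => forall i, (i < m)%nat -> P i q)) by (apply IH; intros i Hi; apply HP; lia).
    apply (filter_imp _ _) with (2 := filter_and _ _ Hlt (HP m ltac:(lia))).
    intros q [Hq Hm] i Hi. destruct (Nat.eq_dec i m) as [->|Hne]; [exact Hm | apply Hq; lia].
Qed.

Lemma filterlim_within_const {T U : UniformSpace} (h : T -> U) (D : T -> Prop) p :
  (forall q, D q -> h q = h p) -> filterlim h (within D (locally p)) (locally (h p)).
Proof.
  intro Hc. unfold filterlim, filter_le. intros P HP. unfold filtermap, within.
  apply filter_forall. intros q Dq. rewrite (Hc q Dq). exact (locally_singleton _ _ HP).
Qed.

Lemma filterlim_within_closed_cover {T U : UniformSpace} (h : T -> U)
  (D : T -> Prop) (S : nat -> T -> Prop) m p :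
  (forall q, D q -> exists i, (i < m)%nat /\ S i q) ->
  (forall i, (i < m)%nat -> closed (S i)) ->
  (forall i, (i < m)%nat -> S i p -> filterlim h (within (S i) (locally p)) (locally (h p))) ->
  filterlim h (within D (locally p)) (locally (h p)).
Proof.
  intros Hcov Hcl Hlim. unfold filterlim, filter_le. intros P HP.
  assert (H : locally p (fun q => forall i, (i < m)%nat -> S i q -> P (h q))).
  { apply (filter_forall_lt _ (fun i q => S i q -> P (h q))). intros i Hi.
    destruct (classic (S i p)) as [Hp|Hp].
    - exact (Hlim i Hi Hp P HP).
    - apply (filter_imp (fun q => ~ S i q)); [tauto|]. exact (open_not _ (Hcl i Hi) p Hp). }
  apply (filter_imp _ _) with (2 := H). intros q Hq Dq.
  destruct (Hcov q Dq) as [i [Hi Hiq]]. exact (Hq i Hi Hiq).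
Qed.

Lemma consecutive_bracket (a : nat -> R) x k :
  (1 <= k)%nat -> a 0%nat <= x <= a k -> exists i, (S i <= k)%nat /\ a i <= x <= a (S i).
Proof.
  induction k as [|k IH]; intros Hk Hx; [lia|].
  destruct (Rle_lt_dec x (a k)) as [Hle|Hlt].
  - destruct k as [|k]; [exists 0%nat; split; [lia | lra]|].
    destruct (IH ltac:(lia) ltac:(lra)) as [i [Hi Hix]]. exists i. split; [lia | exact Hix].
  - exists k. split; [lia | lra].
Qed.

Definition clamp (a b y : R) : R := Rmax a (Rmin y b).

Lemma clamp_id a b y : a <= y <= b -> clamp a b y = y.
Proof. intro. unfold clamp, Rmax, Rmin. repeat destruct Rle_dec; lra. Qed.

Lemma clamp_in a b y : a <= b -> a <= clamp a b y <= b.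
Proof. intro. unfold clamp, Rmax, Rmin. repeat destruct Rle_dec; lra. Qed.

Lemma continuous_clamp a b y : a <= b -> continuous (clamp a b) y.
Proof.
  intro Hab. apply filterlim_locally. intro eps. exists eps. intros z Hz. change R in z.
  rewrite ball_R in *. apply Rle_lt_trans with (2 := Hz).
  unfold clamp, Rmax, Rmin. repeat destruct Rle_dec; unfold Rabs; repeat destruct Rcase_abs; lra.
Qed.

Lemma is_RInt_change_var (H g dg : R -> R) a b I :
  (forall y, continuous H y) -> (forall v, is_derive g v (dg v)) -> (forall v, continuous dg v) ->
  is_RInt (fun v => dg v * H (g v)) a b I -> is_RInt H (g a) (g b) I.
Proof.
  intros HH Hg Hdg HI.
  assert (Hc := is_RInt_comp H g dg a b (fun v _ => HH (g v)) (fun v _ => conj (Hg v) (Hdg v))).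
  replace I with (RInt H (g a) (g b)).
  - refine (RInt_correct _ _ _ _). refine (ex_RInt_continuous _ _ _ _). intros; apply HH.
  - rewrite <- (is_RInt_unique _ _ _ _ HI). symmetry. exact (is_RInt_unique _ _ _ _ Hc).
Qed.

Lemma is_RInt_deriv_mul_id (f fp fpp : R -> R) a b :
  (forall v, is_derive f v (fp v)) -> (forall v, is_derive fp v (fpp v)) ->
  (forall v, continuous fpp v) ->
  is_RInt (fun v => fpp v * v) a b ((fp b * b - f b) - (fp a * a - f a)).
Proof.
  intros Hf Hfp Hfpp.
  apply (is_RInt_derive (fun v => fp v * v - f v)).
  - intros v _.
    assert (K := is_derive_minus _ _ v _ _
                   (is_derive_mult fp (fun x => x) v _ _ (Hfp v) (is_derive_id v) Rmult_comm) (Hf v)).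
    unfold minus, plus, opp, mult, one in K; simpl in K.
    replace (fpp v * v) with (fpp v * v + fp v * 1 + - fp v) by ring. exact K.
  - intros v _. apply (continuous_mult fpp (fun v => v)); [apply Hfpp | exact (continuous_id v)].
Qed.

Definition lin_interp (xa xb ya yb x : R) : R := ya + (x - xa) / (xb - xa) * (yb - ya).

(* The value of [f'(u)] prescribed by the interpolant between the characteristics
   issued from [(A, ua)] and [(B, ub)]. *)
Definition char_speed (fp : R -> R) (t1 A B ua ub x t : R) : R :=
  lin_interp (char_pos fp t1 A ua t) (char_pos fp t1 B ub t) (fp ua) (fp ub) x.

Lemma interp_seg_fp (fp : R -> R) xa xb ua ub x v :
  ua <> ub -> fp ua <> fp ub -> xa < xb -> interp_seg fp xa xb ua ub x v ->
  Rmin ua ub <= v <= Rmax ua ub /\ fp v = lin_interp xa xb (fp ua) (fp ub) x.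
Proof.
  intros Hne Hc Hx [[E _]|[_ [Hv E]]]; [now elim Hne|].
  split; [exact Hv|]. unfold lin_interp. rewrite <- E. field. split; lra.
Qed.

Lemma is_derive_lin_interp xa xb ya yb x :
  xb - xa <> 0 -> is_derive (lin_interp xa xb ya yb) x ((yb - ya) / (xb - xa)).
Proof. intro HD. unfold lin_interp. auto_derive; [exact I | field; exact HD]. Qed.

(* The speed field solves Burgers' equation [w_t + w w_x = 0]: each characteristic
   moves with the speed it carries. *)
Lemma is_derive_char_speed_t (fp : R -> R) t1 A B ua ub x t :
  char_pos fp t1 B ub t - char_pos fp t1 A ua t <> 0 ->
  is_derive (fun s => char_speed fp t1 A B ua ub x s) t
    (- char_speed fp t1 A B ua ub x t *
       ((fp ub - fp ua) / (char_pos fp t1 B ub t - char_pos fp t1 A ua t))).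
Proof.
  intro HD. unfold char_speed, lin_interp, char_pos in *.
  auto_derive; [exact HD | field; exact HD].
Qed.

Lemma continuous_char_speed (fp : R -> R) t1 A B ua ub (p : R * R) :
  char_pos fp t1 B ub (snd p) - char_pos fp t1 A ua (snd p) <> 0 ->
  continuous (fun q => char_speed fp t1 A B ua ub (fst q) (snd q)) p.
Proof.
  destruct p as [x s]. simpl. intro HD.
  apply (continuity_2d_pt_filterlim (char_speed fp t1 A B ua ub)).
  unfold char_speed, lin_interp, char_pos, Rdiv in *.
  repeat first [ apply continuity_2d_pt_plus | apply continuity_2d_pt_minus
               | apply continuity_2d_pt_mult | apply continuity_2d_pt_inv
               | apply continuity_2d_pt_opp
               | apply continuity_2d_pt_id1 | apply continuity_2d_pt_id2
               | apply continuity_2d_pt_const ].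
  exact HD.
Qed.

Lemma continuous_char_pos (fp : R -> R) t1 A v t : continuous (char_pos fp t1 A v) t.
Proof. refine (ex_derive_continuous _ _ _). unfold char_pos. auto_derive. exact I. Qed.

Section Segment.

Variables (f fp fpp : R -> R).
Hypothesis Hf : forall v, is_derive f v (fp v).
Hypothesis Hfp : forall v, is_derive fp v (fpp v).
Hypothesis Hfpp : forall v, continuous fpp v.

Variables (ua ub A B t1 t2 : R) (u : R -> R -> R).
Hypothesis HJ : forall v, Rmin ua ub <= v <= Rmax ua ub -> fpp v <> 0.

Local Notation xa := (char_pos fp t1 A ua).
Local Notation xb := (char_pos fp t1 B ub).
Local Notation w := (char_speed fp t1 A B ua ub).

Hypothesis Hord : forall t, t1 <= t <= t2 -> xa t < xb t.
Hypothesis Hu : forall t, t1 <= t <= t2 -> forall x, xa t <= x <= xb t ->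
  interp_seg fp (xa t) (xb t) ua ub x (u x t).

Definition seg_domain (q : R * R) : Prop :=
  t1 <= snd q <= t2 /\ xa (snd q) <= fst q <= xb (snd q).

Lemma seg_expansive : exists k, 0 < k /\ forall a b,
  Rmin ua ub <= a <= Rmax ua ub -> Rmin ua ub <= b <= Rmax ua ub ->
  k * Rabs (a - b) <= Rabs (fp a - fp b).
Proof.
  destruct (Rabs_lbound_continuous fpp (Rmin ua ub) (Rmax ua ub)) as [k [Hk Hkb]]; auto.
  { apply Rle_trans with ua; [apply Rmin_l | apply Rmax_l]. }
  exists k. split; [exact Hk | exact (expansive_of_deriv_lbound fp fpp _ _ k Hfp Hkb)].
Qed.

Lemma seg_speeds_neq : ua <> ub -> fp ua <> fp ub.
Proof.
  intros Hne E. destruct seg_expansive as [k [Hk Hexp]].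
  apply Hne, (expansive_inj fp _ _ k ua ub Hk Hexp); [| |exact E];
    split; auto using Rmin_l, Rmin_r, Rmax_l, Rmax_r.
Qed.

Lemma seg_const : ua = ub -> forall t x, t1 <= t <= t2 -> xa t <= x <= xb t -> u x t = ua.
Proof. intros Heq t x Ht Hx. destruct (Hu t Ht x Hx) as [[_ E]|[E _]]; [exact E | now elim E]. Qed.

Lemma seg_speed : ua <> ub -> forall t x, t1 <= t <= t2 -> xa t <= x <= xb t ->
  Rmin ua ub <= u x t <= Rmax ua ub /\ fp (u x t) = w x t.
Proof.
  intros Hne t x Ht Hx.
  exact (interp_seg_fp fp _ _ ua ub x _ Hne (seg_speeds_neq Hne) (Hord t Ht) (Hu t Ht x Hx)).
Qed.

Lemma seg_domain_closed : closed seg_domain.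
Proof.
  assert (Hxa : forall p : R * R, continuous (fun q : R * R => xa (snd q)) p).
  { intros [x s]. apply (continuous_comp snd xa); [apply continuous_snd | apply continuous_char_pos]. }
  assert (Hxb : forall p : R * R, continuous (fun q : R * R => xb (snd q)) p).
  { intros [x s]. apply (continuous_comp snd xb); [apply continuous_snd | apply continuous_char_pos]. }
  assert (Hfst : forall p : R * R, continuous fst p) by (intros [x s]; apply continuous_fst).
  assert (Hsnd : forall p : R * R, continuous snd p) by (intros [x s]; apply continuous_snd).
  repeat apply closed_and; apply closed_le_fun; auto using continuous_const.
Qed.

Lemma seg_continuous (p : R * R) : seg_domain p ->
  filterlim (fun q => u (fst q) (snd q)) (within seg_domain (locally p)) (locally (u (fst p) (snd p))).
Proof.
  intros [Hpt Hpx]. destruct (Req_dec ua ub) as [Heq|Hne].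
  - apply (filterlim_within_const (fun q : R * R => u (fst q) (snd q))). intros q [Hqt Hqx].
    now rewrite (seg_const Heq _ _ Hqt Hqx), (seg_const Heq _ _ Hpt Hpx).
  - destruct seg_expansive as [k [Hk Hexp]].
    destruct (seg_speed Hne _ _ Hpt Hpx) as [Hp Ep].
    apply (filterlim_of_expansive _ fp _ _ k _ (fun q => w (fst q) (snd q)) _ Hk Hexp Hp).
    + unfold within. apply filter_forall. intros q [Hqt Hqx]. exact (seg_speed Hne _ _ Hqt Hqx).
    + rewrite Ep. apply (filterlim_filter_le_1 _ (filter_le_within _)).
      apply continuous_char_speed. specialize (Hord _ Hpt). lra.
Qed.

Lemma seg_conservation_law x t : t1 < t < t2 -> xa t < x < xb t ->
  exists ut fx, is_derive (fun s => u x s) t ut /\ is_derive (fun y => f (u y t)) x fx /\ ut + fx = 0.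
Proof.
  intros Ht Hx.
  assert (Hloc_t : locally t (fun s => t1 <= s <= t2 /\ xa s <= x <= xb s)).
  { assert (Hid : continuous (fun s : R => s) t) by apply continuous_id.
    assert (Hcst : forall c : R, continuous (fun _ : R => c) t) by (intro; apply continuous_const).
    assert (L1 := locally_lt _ _ t (Hcst t1) Hid (proj1 Ht)).
    assert (L2 := locally_lt _ _ t Hid (Hcst t2) (proj2 Ht)).
    assert (L3 := locally_lt _ _ t (continuous_char_pos fp t1 A ua t) (Hcst x) (proj1 Hx)).
    assert (L4 := locally_lt _ _ t (Hcst x) (continuous_char_pos fp t1 B ub t) (proj2 Hx)).
    apply (filter_imp _ _) with (2 := filter_and _ _ (filter_and _ _ L1 L2) (filter_and _ _ L3 L4)).
    intros s; lra. }
  assert (Hloc_x : locally x (fun y => xa t <= y <= xb t)).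
  { assert (Hid : continuous (fun y : R => y) x) by apply continuous_id.
    assert (L1 := locally_lt (fun _ => xa t) _ x (continuous_const _ _) Hid (proj1 Hx)).
    assert (L2 := locally_lt _ (fun _ => xb t) x Hid (continuous_const _ _) (proj2 Hx)).
    apply (filter_imp _ _) with (2 := filter_and _ _ L1 L2). intros y; lra. }
  destruct (Req_dec ua ub) as [Heq|Hne].
  - exists 0, 0. split; [|split; [|ring]].
    + apply (is_derive_ext_loc (fun _ => ua)); [|exact (is_derive_const ua t)].
      apply (filter_imp _ _) with (2 := Hloc_t). intros s [Hs Hxs].
      symmetry. exact (seg_const Heq s x Hs Hxs).
    + apply (is_derive_ext_loc (fun _ => f ua)); [|exact (is_derive_const (f ua) x)].
      apply (filter_imp _ _) with (2 := Hloc_x). intros y Hy.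
      rewrite (seg_const Heq t y); [reflexivity | lra | exact Hy].
  - destruct seg_expansive as [k [Hk Hexp]].
    assert (HD : xb t - xa t <> 0) by lra.
    destruct (seg_speed Hne t x ltac:(lra) ltac:(lra)) as [Hux Eux].
    assert (Hfpp0 : fpp (u x t) <> 0) by exact (HJ _ Hux).
    assert (Lt : locally t (fun s => Rmin ua ub <= u x s <= Rmax ua ub /\ fp (u x s) = w x s)).
    { apply (filter_imp _ _) with (2 := Hloc_t). intros s [Hs Hxs]. exact (seg_speed Hne s x Hs Hxs). }
    assert (Lx : locally x (fun y => Rmin ua ub <= u y t <= Rmax ua ub /\ fp (u y t) = w y t)).
    { apply (filter_imp _ _) with (2 := Hloc_x). intros y Hy. exact (seg_speed Hne t y ltac:(lra) Hy). }
    assert (Dt := is_derive_inverse fp fpp (fun s => u x s) (fun s => w x s) _ _ k t _ Hk Hexp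
                    (Hfp _) Hfpp0 Lt (is_derive_char_speed_t fp t1 A B ua ub x t HD)).
    assert (Dx := is_derive_inverse fp fpp (fun y => u y t) (fun y => w y t) _ _ k x _ Hk Hexp
                    (Hfp _) Hfpp0 Lx (is_derive_lin_interp _ _ _ _ x HD)).
    eexists; eexists. split; [exact Dt|].
    split; [exact (is_derive_comp f (fun y => u y t) x _ _ (Hf _) Dx)|].
    unfold scal; simpl; unfold mult; simpl. rewrite Eux. field. split; assumption.
Qed.

Lemma seg_inverse t v : ua <> ub -> t1 <= t <= t2 -> Rmin ua ub <= v <= Rmax ua ub ->
  let y := lin_interp (fp ua) (fp ub) (xa t) (xb t) (fp v) in xa t <= y <= xb t /\ u y t = v.
Proof.
  intros Hne Ht Hv y. destruct seg_expansive as [k [Hk Hexp]].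
  assert (Hc : fp ub - fp ua <> 0) by (apply Rminus_eq_contra, not_eq_sym, seg_speeds_neq, Hne).
  assert (Hy : xa t <= y <= xb t).
  { assert (Hbtw := deriv_nonzero_between fp fpp ua ub v Hfp Hfpp HJ Hv).
    set (th := (fp v - fp ua) / (fp ub - fp ua)).
    assert (Eth : fp v - fp ua = th * (fp ub - fp ua)) by (unfold th; field; exact Hc).
    assert (Hth : 0 <= th <= 1).
    { replace (fp ub - fp v) with ((1 - th) * (fp ub - fp ua)) in Hbtw by lra. rewrite Eth in Hbtw.
      assert (Hsq : 0 < (fp ub - fp ua) * (fp ub - fp ua)) by exact (Rsqr_pos_lt _ Hc).
      assert (0 <= th * (1 - th)).
      { apply Rmult_le_reg_r with ((fp ub - fp ua) * (fp ub - fp ua)); [exact Hsq | lra]. }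
      split; nra. }
    specialize (Hord t Ht). unfold y, lin_interp. fold th. nra. }
  split; [exact Hy|].
  destruct (seg_speed Hne t y Ht Hy) as [Huy Euy].
  apply (expansive_inj fp _ _ k _ _ Hk Hexp Huy Hv). rewrite Euy.
  specialize (Hord t Ht). unfold y, char_speed, lin_interp. field. split; lra.
Qed.

Lemma seg_is_RInt t : t1 <= t <= t2 ->
  is_RInt (fun x => u x t) (xa t) (xb t) ((xb t - xa t) * nl_avg f fp ua ub).
Proof.
  intro Ht. assert (Hxab := Hord t Ht).
  destruct (Req_dec ua ub) as [Heq|Hne].
  - unfold nl_avg. destruct (Req_EM_T ua ub) as [_|C]; [|now elim C].
    apply (is_RInt_ext (fun _ => ua)); [|exact (is_RInt_const (xa t) (xb t) ua)].
    intros x Hx. rewrite Rmin_left, Rmax_right in Hx by lra. symmetry. apply seg_const; lra.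
  - destruct seg_expansive as [k [Hk Hexp]].
    assert (Hc : fp ub - fp ua <> 0) by (apply Rminus_eq_contra, not_eq_sym, seg_speeds_neq, Hne).
    set (D := xb t - xa t). set (c := fp ub - fp ua) in Hc.
    (* [is_RInt_comp] wants an integrand continuous on the whole line, hence the
       clamped extension [H] of [u(., t)]; [g] is the inverse of [u(., t)]. *)
    set (H := fun y => u (clamp (xa t) (xb t) y) t).
    set (g := fun v => lin_interp (fp ua) (fp ub) (xa t) (xb t) (fp v)).
    assert (HH : forall y, continuous H y).
    { intro y. assert (Hcl := fun z => clamp_in (xa t) (xb t) z ltac:(lra)).
      apply (filterlim_of_expansive _ fp _ _ k H (fun z => w (clamp (xa t) (xb t) z) t) _ Hk Hexp
               (proj1 (seg_speed Hne t _ Ht (Hcl y)))).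
      - apply filter_forall. intro z. exact (seg_speed Hne t _ Ht (Hcl z)).
      - rewrite (proj2 (seg_speed Hne t _ Ht (Hcl y))).
        apply (continuous_comp (clamp (xa t) (xb t)) (fun z => w z t)); [apply continuous_clamp; lra|].
        refine (ex_derive_continuous _ _ _). eexists. apply is_derive_lin_interp. unfold D in *; lra. }
    assert (Hg : forall v, is_derive g v (fpp v * (D / c))).
    { intro v. apply (is_derive_comp (lin_interp (fp ua) (fp ub) (xa t) (xb t)) fp v); [|apply Hfp].
      apply is_derive_lin_interp. exact Hc. }
    assert (Hdg : forall v, continuous (fun v => fpp v * (D / c)) v).
    { intro v. apply (continuous_mult fpp (fun _ => D / c)); [apply Hfpp | apply continuous_const]. }
    apply (is_RInt_ext H).
    { intros x Hx. rewrite Rmin_left, Rmax_right in Hx by lra.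
      unfold H. rewrite clamp_id; [reflexivity | lra]. }
    replace (xa t) with (g ua) by (unfold g, lin_interp; field; exact Hc).
    replace (xb t) with (g ub) by (unfold g, lin_interp; fold c; field; exact Hc).
    apply (is_RInt_change_var H g _ ua ub _ HH Hg Hdg).
    apply (is_RInt_ext (fun v => scal (D / c) (fpp v * v))).
    { intros v Hv. assert (Hv' : Rmin ua ub <= v <= Rmax ua ub) by lra.
      destruct (seg_inverse t v Hne Ht Hv') as [Hgv Egv].
      unfold H, g. rewrite clamp_id by exact Hgv. rewrite Egv.
      unfold scal; simpl; unfold mult; simpl. ring. }
    replace (D * nl_avg f fp ua ub) with (scal (D / c) ((fp ub * ub - f ub) - (fp ua * ua - f ua))).
    + apply (is_RInt_scal (fun v => fpp v * v)). exact (is_RInt_deriv_mul_id f fp fpp _ _ Hf Hfp Hfpp).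
    + unfold nl_avg. destruct (Req_EM_T ua ub) as [C|_]; [now elim Hne|].
      unfold scal; simpl; unfold mult; simpl. fold c. field. exact Hc.
Qed.

End Segment.
Theorem corollary2
  (f fp fpp : R -> R)
  (Hf : forall v, is_derive f v (fp v))
  (Hfp : forall v, is_derive fp v (fpp v))
  (Hfpp : forall v, continuous fpp v)
  (n : nat) (Hn : (0 < n)%nat) (U X0 : nat -> R)
  (HJ : forall v, (exists i j, (i < n)%nat /\ (j < n)%nat /\ U i <= v <= U j) ->
                  fpp v <> 0)
  (t1 t2 : R) (Ht : t1 < t2)
  (Hord : forall t, t1 <= t <= t2 -> forall i, (S i < n)%nat ->
            char_pos fp t1 (X0 i) (U i) t < char_pos fp t1 (X0 (S i)) (U (S i)) t)
  (u : R -> R -> R)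
  (Hu0 : forall t, t1 <= t <= t2 -> forall i, (i < n)%nat ->
           u (char_pos fp t1 (X0 i) (U i) t) t = U i)
  (Hu : forall t, t1 <= t <= t2 -> forall i, (S i < n)%nat -> forall x,
          char_pos fp t1 (X0 i) (U i) t <= x <= char_pos fp t1 (X0 (S i)) (U (S i)) t ->
          interp_seg fp (char_pos fp t1 (X0 i) (U i) t)
                        (char_pos fp t1 (X0 (S i)) (U (S i)) t)
                        (U i) (U (S i)) x (u x t)) :
  let D := fun p : R * R => t1 <= snd p <= t2 /\
             char_pos fp t1 (X0 0%nat) (U 0%nat) (snd p) <= fst p <=
             char_pos fp t1 (X0 (pred n)) (U (pred n)) (snd p) in
  (forall p, D p ->
     filterlim (fun q : R * R => u (fst q) (snd q)) (within D (locally p))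
               (locally (u (fst p) (snd p))))
  /\
  (forall x t i, t1 < t < t2 -> (S i < n)%nat ->
     char_pos fp t1 (X0 i) (U i) t < x < char_pos fp t1 (X0 (S i)) (U (S i)) t ->
     exists ut fx,
       is_derive (fun s => u x s) t ut /\
       is_derive (fun y => f (u y t)) x fx /\
       ut + fx = 0)
  /\
  (forall t i, t1 <= t <= t2 -> (S i < n)%nat ->
     is_RInt (fun x => u x t)
       (char_pos fp t1 (X0 i) (U i) t) (char_pos fp t1 (X0 (S i)) (U (S i)) t)
       ((char_pos fp t1 (X0 (S i)) (U (S i)) t - char_pos fp t1 (X0 i) (U i) t)
          * nl_avg f fp (U i) (U (S i)))).
Proof.
  intros D.
  assert (HJs : forall i, (S i < n)%nat ->
            forall v, Rmin (U i) (U (S i)) <= v <= Rmax (U i) (U (S i)) -> fpp v <> 0).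
  { intros i Hi v Hv. apply HJ. revert Hv; unfold Rmin, Rmax; destruct Rle_dec; intro Hv;
      [exists i, (S i) | exists (S i), i]; repeat split; try lia; lra. }
  split; [|split].
  - intros p Hp. destruct (Nat.eq_dec n 1) as [Hn1|Hn1].
    + subst n. apply (filterlim_within_const (fun q : R * R => u (fst q) (snd q))).
      intros [x s] [Hs Hx]. destruct p as [y t], Hp as [Ht0 Hy]. simpl in *.
      replace x with (char_pos fp t1 (X0 0%nat) (U 0%nat) s) by lra.
      replace y with (char_pos fp t1 (X0 0%nat) (U 0%nat) t) by lra.
      rewrite !Hu0 by (assumption || lia). reflexivity.
    + apply (filterlim_within_closed_cover (fun q : R * R => u (fst q) (snd q)) D
               (fun i => seg_domain fp (U i) (U (S i)) (X0 i) (X0 (S i)) t1 t2) (pred n)).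
      * intros q [Hqt Hqx].
        destruct (consecutive_bracket (fun i => char_pos fp t1 (X0 i) (U i) (snd q)) (fst q) (pred n)
                    ltac:(lia) Hqx) as [i [Hi Hix]].
        exists i. split; [lia | split; assumption].
      * intros i _. apply seg_domain_closed.
      * intros i Hi. assert (Hi' : (S i < n)%nat) by lia.
        exact (seg_continuous fp fpp Hfp Hfpp _ _ _ _ t1 t2 u (HJs i Hi')
                 (fun s Hs => Hord s Hs i Hi') (fun s Hs => Hu s Hs i Hi') p).
  - intros x t i Ht0 Hi.
    exact (seg_conservation_law f fp fpp Hf Hfp Hfpp _ _ _ _ t1 t2 u (HJs i Hi)
             (fun s Hs => Hord s Hs i Hi) (fun s Hs => Hu s Hs i Hi) x t Ht0).
  - intros t i Ht0 Hi.
    exact (seg_is_RInt f fp fpp Hf Hfp Hfpp _ _ _ _ t1 t2 u (HJs i Hi)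
             (fun s Hs => Hord s Hs i Hi) (fun s Hs => Hu s Hs i Hi) t Ht0).
Qed.
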